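(* Let $n>4$. In any sparse ordering $\sigma$ of $U_n$, the position of $v_1$ is $1$ or $2$ and the position of $v_n$ is $n$ or $n-1$. Furthermore, for no $i\in[n-1]$ is $v_i$ immediately followed by $v_{i+1}$ in $\sigma$.
   Context: For $n\ge1$, $U_n$ is the tournament with vertex set $\{v_1,\dots,v_n\}$ and arc set $\{(v_{i+1},v_i): i\in[n-1]\}\cup\{(v_i,v_j): 1\le i<n,\ i+1<j\le n\}$. For an ordering of the vertices, an arc $(x,y)$ is backward if $y$ comes before $x$. An ordering is sparse if every vertex is incident to at most one backward arc. Positions in an ordering are numbered $1,\dots,n$. *)

From mathcomp Require Import all_boot.
Set Implicit Arguments. Unset Strict Implicit. Unset Printing Implicit Defensive.

(* Vertices of U_n are the ordinals x : 'I_n; the paper's vertex v_k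
   (1 <= k <= n) is the ordinal with value k - 1. *)

(* Arc relation of U_n: (v_{i+1}, v_i) for i in [n-1], and (v_i, v_j) for
   i < n, i + 1 < j <= n.  The shift by one in indexing does not affect it. *)
Definition U_arc (n : nat) (x y : 'I_n) : bool :=
  (val x == (val y).+1) || ((val x).+1 < val y).

(* An ordering is given by its (injective, hence bijective) position map
   pos : 'I_n -> 'I_n; the paper's position p is val (pos x) + 1. *)
Definition is_ordering (n : nat) (pos : 'I_n -> 'I_n) : Prop := injective pos.

Definition backward (n : nat) (pos : 'I_n -> 'I_n) (x y : 'I_n) : bool :=
  U_arc x y && (pos y < pos x).

Definition sparse (n : nat) (pos : 'I_n -> 'I_n) : Prop :=
  forall v : 'I_n,
    #|[set e : 'I_n * 'I_n | backward pos e.1 e.2 && ((e.1 == v) || (e.2 == v))]| <= 1.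

From mathcomp Require Import all_boot zify.
Set Implicit Arguments. Unset Strict Implicit. Unset Printing Implicit Defensive.

(* If v_i were
   immediately followed by v_(i+1), the backward arc v_(i+1) v_i would lie on a
   directed triangle with v_(i+2) (or v_(i-1)); wherever the third vertex sits,
   it yields a second backward arc at v_i or at v_(i+1).  If v_1 were at
   position 3 or later, one of the two first positions would hold some v_w with
   w >= 3; for the earliest such v_w, both v_1 -> v_w and the arc into v_w from
   v_(w+1) (from v_3 when w = n, which needs n > 4) are backward.  The claim
   about v_n follows by symmetry: v_k |-> v_(n+1-k) reverses every arc of U_n,
   so it maps sparse orderings to reversed sparse orderings. *)

Lemma U_arc_rev n (x y : 'I_n) : U_arc (rev_ord x) (rev_ord y) = U_arc y x.
Proof.
have := ltn_ord x; have := ltn_ord y; rewrite /U_arc /= => ? ?.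
by apply/idP/idP; lia.
Qed.

Definition rev_ordering n (pos : 'I_n -> 'I_n) (x : 'I_n) : 'I_n :=
  rev_ord (pos (rev_ord x)).

Lemma rev_ordering_inj n (pos : 'I_n -> 'I_n) :
  injective pos -> injective (rev_ordering pos).
Proof. by move=> pos_inj x y /rev_ord_inj /pos_inj /rev_ord_inj. Qed.

Lemma backward_rev_ordering n (pos : 'I_n -> 'I_n) (x y : 'I_n) :
  backward (rev_ordering pos) x y = backward pos (rev_ord y) (rev_ord x).
Proof.
rewrite /backward /rev_ordering U_arc_rev; congr andb => /=.
have := ltn_ord (pos (rev_ord x)); have := ltn_ord (pos (rev_ord y)) => ? ?.
by apply/idP/idP; lia.
Qed.

Section SparseOrdering.

Variables (n : nat) (pos : 'I_n -> 'I_n).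
Hypotheses (pos_inj : injective pos) (pos_sparse : sparse pos).

Lemma sparse_backward_eq (v : 'I_n) (e e' : 'I_n * 'I_n) :
  backward pos e.1 e.2 -> backward pos e'.1 e'.2 ->
  v \in [:: e.1; e.2] -> v \in [:: e'.1; e'.2] -> e = e'.
Proof.
move=> be be' ve ve'.
apply: (card_le1_eqP (pos_sparse v)); rewrite inE ?be ?be' /=.
  by move: ve'; rewrite !inE !(eq_sym v).
by move: ve; rewrite !inE !(eq_sym v).
Qed.

Lemma sparse_backward_into (x x' y : 'I_n) :
  backward pos x y -> backward pos x' y -> x = x'.
Proof.
move=> bxy bx'y.
have := sparse_backward_eq (v := y) (e := (x, y)) (e' := (x', y)) bxy bx'y.
by rewrite !inE /= eqxx !orbT => /(_ isT isT) /(congr1 fst).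
Qed.

Lemma sparse_backward_pathF (x y z : 'I_n) :
  backward pos x y -> backward pos y z -> False.
Proof.
move=> bxy byz.
have := sparse_backward_eq (v := y) (e := (x, y)) (e' := (y, z)) bxy byz.
rewrite !inE /= !eqxx orbT => /(_ isT isT) /(congr1 fst) /= xy.
by move: bxy; rewrite /backward xy ltnn andbF.
Qed.

Lemma sparse_rev_ordering : sparse (rev_ordering pos).
Proof.
move=> v; apply/card_le1_eqP => -[a b] [c d].
rewrite !inE /= !backward_rev_ordering => /andP[bba vab] /andP[bdc vcd].
have := sparse_backward_eq (v := rev_ord v) (e := (rev_ord b, rev_ord a))
                           (e' := (rev_ord d, rev_ord c)) bba bdc.
rewrite !inE /= !(inj_eq (@rev_ord_inj _)) !(eq_sym v) orbC vab orbC vcd.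
move=> /(_ isT isT) /(congr1 (fun e => (rev_ord e.2, rev_ord e.1))).
by rewrite /= !rev_ordK.
Qed.

Lemma backward_triangleF (x y w : 'I_n) :
  pos y = (pos x).+1 :> nat -> U_arc y x -> U_arc x w -> U_arc w y -> False.
Proof.
move=> pyx yx xw wy.
have byx : backward pos y x by rewrite /backward yx /=; lia.
have pos_neq (u : 'I_n) : U_arc u w || U_arc w u -> pos w != pos u :> nat.
  by apply: contraTneq => /ord_inj /pos_inj ->; rewrite /U_arc; lia.
have := pos_neq x; have := pos_neq y.
rewrite xw wy !orbT => /(_ isT) ? /(_ isT) ?.
case: (ltnP (pos w) (pos x)) => pwx.
  by apply: (sparse_backward_pathF byx (z := w)); rewrite /backward xw.
by apply: (sparse_backward_pathF (x := w) _ byx); rewrite /backward wy /=; lia.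
Qed.

Lemma sparse_no_consecutive (x y : 'I_n) :
  2 < n -> y = x.+1 :> nat -> pos y <> (pos x).+1 :> nat.
Proof.
move=> n_gt2 yx pyx.
have [w xw wy] : exists2 w : 'I_n, U_arc x w & U_arc w y.
  case: (ltnP y.+1 n) => [y2 | y_last].
    by exists (Ordinal y2); rewrite /U_arc /=; lia.
  have x1 : x.-1 < n by have := ltn_ord x; lia.
  by exists (Ordinal x1); rewrite /U_arc /=; lia.
by apply: (backward_triangleF pyx) xw wy; rewrite /U_arc /=; lia.
Qed.

Lemma sparse_first_pos (x0 : 'I_n) : 4 < n -> x0 = 0 :> nat -> pos x0 <= 1.
Proof.
move=> n_gt4 x0_0; rewrite leqNgt; apply/negP => px0.
have two : 2 < n by lia.
case: (@arg_minnP _ (Ordinal two) (fun u : 'I_n => 1 < u) (fun u => pos u)) => //.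
move=> w w_gt1 w_min.
have pos_onto (p : 'I_n) : exists u, pos u = p.
  by exists (invF pos_inj p); apply: f_invF.
have in_front (u : 'I_n) : pos u <= 1 -> u = 1 :> nat \/ pos w <= 1.
  move=> pu; case: (ltnP 1 u) => [/w_min | u_le1]; [right; lia | left].
  suff: u != 0 :> nat by lia.
  apply: contraTneq pu => u0.
  by rewrite (_ : u = x0) -?ltnNge //; apply/ord_inj; lia.
have pw : pos w <= 1.
  have [a pa] := pos_onto (Ordinal (ltnW two)).
  have [b pb] := pos_onto (Ordinal (ltnW (ltnW two))).
  have := in_front a; rewrite pa => /(_ isT) [a1 | //].
  have := in_front b; rewrite pb => /(_ isT) [b1 | //].
  by move: pa pb; rewrite (ord_inj (etrans a1 (esym b1))) => ->.
have bx0w : backward pos x0 w by rewrite /backward /U_arc /=; lia.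
have [u [u_gt1 [uw u_ne_w]]] : exists u : 'I_n, 1 < u /\ U_arc u w /\ u != w.
  case: (ltnP w.+1 n) => [w1 | w_last].
    by exists (Ordinal w1); rewrite /U_arc -val_eqE /=; lia.
  by exists (Ordinal two); rewrite /U_arc -val_eqE /=; have := ltn_ord w; lia.
have buw : backward pos u w.
  rewrite /backward uw ltn_neqAle w_min // andbT.
  by rewrite val_eqE (inj_eq pos_inj) eq_sym.
by have := sparse_backward_into bx0w buw => /(congr1 val) /=; lia.
Qed.

End SparseOrdering.

Theorem mainTheorem11 (n : nat) (pos : 'I_n -> 'I_n) :
  4 < n -> is_ordering pos -> sparse pos ->
  (* v_1 is at position 1 or 2 *)
  (forall x : 'I_n, val x = 0 -> val (pos x) <= 1) /\
  (* v_n is at position n or n-1 *)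
  (forall x : 'I_n, val x = n.-1 -> n.-2 <= val (pos x)) /\
  (* no v_i is immediately followed by v_{i+1} *)
  (forall x y : 'I_n, val y = (val x).+1 -> val (pos y) <> (val (pos x)).+1).
Proof.
move=> n_gt4 pos_inj pos_sparse; split; [|split].
- by move=> x; apply: sparse_first_pos.
- move=> x /= x_last.
  have := sparse_first_pos (rev_ordering_inj pos_inj)
            (sparse_rev_ordering pos_sparse) (x0 := rev_ord x) n_gt4.
  by rewrite /rev_ordering rev_ordK /=; lia.
- by move=> x y /= yx; apply: sparse_no_consecutive => //; lia.
Qed.
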